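(* Let $S=(n,\phi,F)$ be a semicoherent system whose lifetime distribution has no ties. Then for every $j\in[n]$, $$I_{\mathrm{BP}}^{(j)}=\sum_{A\subseteq[n]\setminus\{j\}}r_j(A)\,m_\phi(A\cup\{j\}).$$
   Context: Semicoherent system $S=(n,\phi,F)$: $\phi:2^{[n]}\to\{0,1\}$ nondecreasing (subsets identified with Boolean vectors), $\phi(\varnothing)=0$, $\phi([n])=1$; $F$ is the joint c.d.f. of nonnegative component lifetimes $X_1,\ldots,X_n$ with $\Pr(X_i=X_k)=0$ for $i\neq k$. System lifetime $T=\inf\{t\geq0:\phi(\{i:X_i>t\})=0\}$, and $I_{\mathrm{BP}}^{(j)}=\Pr(T=X_j)$. The Möbius transform of $\phi$ is $m_\phi(A)=\sum_{B\subseteq A}(-1)^{|A|-|B|}\phi(B)$. For $j\in[n]$ and $A\subseteq[n]\setminus\{j\}$, $r_j(A)=\Pr\big(X_j<\min_{i\in A}X_i\big)$ (empty min $=+\infty$). *)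

From HB Require Import structures.
From mathcomp Require Import all_boot all_order all_algebra.
Set Implicit Arguments. Unset Strict Implicit. Unset Printing Implicit Defensive.
Import Order.TTheory GRing.Theory Num.Theory.
Local Open Scope ring_scope.

(* A (finitely additive) probability space: an algebra of measurable events
   (predicates on Omega) and a probability on it. *)
Record prob_space (R : realFieldType) (Omega : Type) := ProbSpace {
  measurable : (Omega -> Prop) -> Prop;
  prob : (Omega -> Prop) -> R;
  measurableT : measurable (fun _ => True);
  measurableC : forall E, measurable E -> measurable (fun w => ~ E w);
  measurableU : forall E F, measurable E -> measurable F ->
                  measurable (fun w => E w \/ F w);
  measurable_ext : forall E F, (forall w, E w <-> F w) ->
                  measurable E -> measurable F;
  prob_ext : forall E F, (forall w, E w <-> F w) -> prob E = prob F;
  prob_ge0 : forall E, measurable E -> 0 <= prob E;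
  probT : prob (fun _ => True) = 1;
  prob_add : forall E F, measurable E -> measurable F ->
               (forall w, E w -> F w -> False) ->
               prob (fun w => E w \/ F w) = prob E + prob F
}.

Definition is_inf (R : realFieldType) (S : R -> Prop) (x : R) : Prop :=
  (forall t, S t -> x <= t) /\
  (forall y, (forall t, S t -> y <= t) -> y <= x).

Definition semicoherent (n : nat) (phi : {set 'I_n} -> bool) : Prop :=
  (forall A B : {set 'I_n}, A \subset B -> phi A -> phi B) /\
  phi set0 = false /\ phi setT = true.

Definition system_lifetime_is (R : realFieldType) (n : nat) (Omega : Type)
  (phi : {set 'I_n} -> bool) (X : Omega -> 'I_n -> R) (w : Omega) (x : R) : Prop :=
  is_inf (fun t => 0 <= t /\ phi [set i | t < X w i] = false) x.

Definition mobius (R : realFieldType) (n : nat) (phi : {set 'I_n} -> bool)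
  (A : {set 'I_n}) : R :=
  \sum_(B : {set 'I_n} | B \subset A) (-1) ^+ (#|A| - #|B|) * (phi B)%:R.

(* r_j(A) = Pr(X_j < min_{i in A} X_i) (empty min = +infinity) *)
Definition r_prob (R : realFieldType) (n : nat) (Omega : Type)
  (PS : prob_space R Omega) (X : Omega -> 'I_n -> R) (j : 'I_n)
  (A : {set 'I_n}) : R :=
  prob PS (fun w => forall i, i \in A -> X w j < X w i).

(* Barlow-Proschan importance of component j: Pr(T = X_j) *)
Definition I_BP (R : realFieldType) (n : nat) (Omega : Type)
  (PS : prob_space R Omega) (phi : {set 'I_n} -> bool)
  (X : Omega -> 'I_n -> R) (j : 'I_n) : R :=
  prob PS (fun w => system_lifetime_is phi X w (X w j)).

From HB Require Import structures.
From mathcomp Require Import all_boot all_order all_algebra.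
From Stdlib Require Import Classical.
Import Order.TTheory GRing.Theory Num.Theory.
Local Open Scope ring_scope.

(* For an outcome [w] let [outliving B] mean that the components failing
   strictly after component [j] form exactly the set [B].  These events
   partition the sample space, and
   - [r_j(A)] is the total probability of the [outliving B] with [A ⊆ B];
   - outside the null event of ties, [T = X_j] on [outliving B] holds exactly
     when [j] is critical for [B] (deterministic lemma [lifetime_criticalP]),
     so [I_BP(j)] is the total probability of the [outliving B] with [j]
     critical for [B].
   Exchanging the two sums, the theorem reduces to the combinatorial identity
   [sum_(A ⊆ B) m_phi(j ∪ A) = phi(j ∪ B) - phi(B)] for [j ∉ B] (a form of
   Moebius inversion), whose right side is the indicator that [j] is critical
   for [B] when [phi] is monotone. *)

Section MobiusInversion.
Local Set Implicit Arguments.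
Local Unset Strict Implicit.
Variables (T : finType) (R : comPzRingType).

(* The Moebius transform of an arbitrary set function [g]; the [mobius] of a
   structure function is the case [g B = (phi B)%:R]. *)
Definition mobf (g : {set T} -> R) (A : {set T}) : R :=
  \sum_(B : {set T} | B \subset A) (-1) ^+ (#|A| - #|B|) * g B.

Lemma subsetU1_notin (x : T) (A D : {set T}) : x \notin D ->
  (D \subset x |: A) = (D \subset A).
Proof.
move=> xD; apply/idP/idP => [sDxA|sDA].
  by apply/subsetP => y yD; move: (subsetP sDxA y yD); rewrite in_setU1;
    case/orP => // /eqP eyx; rewrite -eyx yD in xD.
exact: subset_trans sDA (subsetUr _ _).
Qed.

Lemma sum_subsetU1 (x : T) (A : {set T}) (F : {set T} -> R) : x \notin A ->
  \sum_(D : {set T} | D \subset x |: A) F D =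
  \sum_(D : {set T} | D \subset A) F D
  + \sum_(D : {set T} | D \subset A) F (x |: D).
Proof.
move=> xA.
have xD_nsub (D : {set T}) : x \in D -> (D \subset A) = false.
  by move=> xD; apply/negP => /subsetP/(_ x xD); rewrite (negbTE xA).
rewrite (bigID (fun D : {set T} => x \in D)) /= addrC; congr (_ + _).
  apply: eq_bigl => D; case xD: (x \in D); first by rewrite andbF xD_nsub.
  by rewrite andbT subsetU1_notin ?xD.
rewrite (reindex_onto (fun D : {set T} => x |: D) (fun D => D :\ x)) /=; last first.
  by move=> D /andP[_ xD]; rewrite setD1K.
apply: eq_bigl => D; case xD: (x \in D).
  rewrite xD_nsub //; apply/negbTE/negP => /andP[_ /eqP eD].
  by move: xD; rewrite -eD setD11.
rewrite setU1K ?xD // eqxx andbT setU11 andbT subUset sub1set setU11 /=.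
by rewrite subsetU1_notin ?xD.
Qed.

Lemma mobfU1 (x : T) (A : {set T}) (g : {set T} -> R) : x \notin A ->
  mobf g (x |: A) = mobf (fun D => g (x |: D) - g D) A.
Proof.
move=> xA; rewrite /mobf sum_subsetU1 // -big_split /=; apply: eq_bigr => D sDA.
have xD : x \notin D by apply: contra xA; apply: subsetP.
rewrite !cardsU1 xA xD !add1n subSS subSn ?subset_leq_card // exprS.
by rewrite mulrBr mulN1r mulNr addrC.
Qed.

Lemma mobf_inversion (B : {set T}) (g : {set T} -> R) :
  \sum_(A : {set T} | A \subset B) mobf g A = g B.
Proof.
move: {2}#|B| (erefl #|B|) => k; elim: k B g => [|k IH] B g cardB.
  have -> : B = set0 by apply/eqP; rewrite -cards_eq0 cardB.
  rewrite (big_pred1 set0) => [|A]; last by rewrite /= subset0.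
  rewrite /mobf (big_pred1 set0) => [|A]; last by rewrite /= subset0.
  by rewrite cards0 subnn expr0 mul1r.
have [x xB] : exists x, x \in B by apply/set0Pn; rewrite -cards_eq0 cardB.
have xBx : x \notin B :\ x by rewrite setD11.
have cardBx : #|B :\ x| = k by move: (cardsD1 x B); rewrite xB cardB add1n => -[].
rewrite -{1 2}(setD1K xB) sum_subsetU1 // IH //.
rewrite (eq_bigr (mobf (fun D => g (x |: D) - g D))) => [|A sA]; last first.
  by apply: mobfU1; apply: contra xBx; apply: subsetP.
by rewrite IH // addrC subrK.
Qed.

Lemma sum_mobfU1 (x : T) (B : {set T}) (g : {set T} -> R) : x \notin B ->
  \sum_(A : {set T} | A \subset B) mobf g (x |: A) = g (x |: B) - g B.
Proof.
move=> xB; rewrite -(mobf_inversion B (fun D => g (x |: D) - g D)).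
by apply: eq_bigr => A sAB; apply: mobfU1; apply: contra xB; apply: subsetP.
Qed.

End MobiusInversion.

Definition critical {n : nat} (phi : {set 'I_n} -> bool) (j : 'I_n)
  (B : {set 'I_n}) : bool := phi (j |: B) && ~~ phi B.

Lemma critical_increment (R : pzRingType) (n : nat) (phi : {set 'I_n} -> bool)
  (j : 'I_n) (B : {set 'I_n}) :
  (forall A B : {set 'I_n}, A \subset B -> phi A -> phi B) ->
  (phi (j |: B))%:R - (phi B)%:R = (critical phi j B)%:R :> R.
Proof.
rewrite /critical => mono; case: (boolP (phi B)) => [phiB|_].
  by rewrite (mono _ _ (subsetUr _ _) phiB) subrr.
by rewrite subr0 andbT.
Qed.

Section CriticalComponent.
Local Set Implicit Arguments.
Local Unset Strict Implicit.
Variables (R : realFieldType) (n : nat) (phi : {set 'I_n} -> bool).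
Variable x : 'I_n -> R.
Hypothesis Hphi : semicoherent phi.
Hypothesis x_ge0 : forall i, 0 <= x i.

Definition survivors (t : R) : {set 'I_n} := [set i | t < x i].

Lemma in_survivors (t : R) (i : 'I_n) : (i \in survivors t) = (t < x i).
Proof. by rewrite inE. Qed.

Definition failed (t : R) : Prop := 0 <= t /\ phi (survivors t) = false.

Lemma lifetime_of_critical (j : 'I_n) :
  phi [set i | x j <= x i] -> ~~ phi (survivors (x j)) -> is_inf failed (x j).
Proof.
case: Hphi => mono _ phi_le nphi_lt; split=> [t [_ phit]|y lb_y].
  rewrite leNgt; apply/negP => ltj; suff: phi (survivors t) by rewrite phit.
  by apply: mono phi_le; apply/subsetP => i; rewrite !inE; apply: lt_le_trans.
by apply: lb_y; split; [exact: x_ge0 | exact/negbTE].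
Qed.

Lemma lifetime_down (j : 'I_n) :
  is_inf failed (x j) -> ~~ phi (survivors (x j)).
Proof.
case: Hphi => [mono [phi0 _]] [_ glb]; apply/negP => phiU.
have [i0 ji0] : exists i0, x j < x i0.
  have /set0Pn[i0] : survivors (x j) != set0.
    by apply: contraTneq phiU => ->; rewrite phi0.
  by rewrite inE; exists i0.
case: (arg_minP x (ji0 : (fun i => x j < x i) i0)) => m jm m_min.
(* the first later failure [x m] would be a lower bound of the failure times *)
suff: x m <= x j by rewrite leNgt jm.
apply: glb => t [_ phit]; rewrite leNgt; apply/negP => ltm.
suff: phi (survivors t) by rewrite phit.
apply: mono phiU; apply/subsetP => i; rewrite !inE => ji.
exact: lt_le_trans ltm (m_min i ji).
Qed.

Lemma failed_before (j : 'I_n) :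
  ~~ phi [set i | x j <= x i] -> exists2 t, failed t & t < x j.
Proof.
case: Hphi => [_ [_ phiT]] nphi.
have failed_at t : 0 <= t -> t < x j -> (forall i, x i < x j -> x i <= t) ->
    failed t.
  move=> t_ge0 t_lt t_max; split => //; apply/negbTE; congr (~~ phi _): nphi.
  apply/setP => i; rewrite !inE; case: (ltP (x i) (x j)) => [/t_max|le_ji].
    by rewrite leNgt => /negbTE.
  by rewrite (lt_le_trans t_lt le_ji).
case: (pickP (fun i => x i < x j)) => [i0 i0_lt|none].
  case: (arg_maxP x (i0_lt : (fun i => x i < x j) i0)) => m m_lt m_max.
  by exists (x m) => //; apply: failed_at.
have xj_gt0 : 0 < x j.
  rewrite lt_def x_ge0 andbT; apply: contra nphi => /eqP xj0.
  suff -> : [set i | x j <= x i] = setT by rewrite phiT.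
  by apply/setP => i; rewrite !inE xj0 x_ge0.
by exists 0 => //; apply: failed_at => // i; rewrite none.
Qed.

Lemma lifetime_up (j : 'I_n) :
  is_inf failed (x j) -> phi [set i | x j <= x i].
Proof.
move=> [lb _]; apply/negPn/negP => /failed_before[t /lb le_jt].
by rewrite ltNge le_jt.
Qed.

Lemma lifetimeP (j : 'I_n) :
  is_inf failed (x j) <-> phi [set i | x j <= x i] && ~~ phi (survivors (x j)).
Proof.
split=> [life|/andP[]]; last exact: lifetime_of_critical.
by rewrite lifetime_up ?lifetime_down.
Qed.

Lemma le_setE (j : 'I_n) : (forall i k, i != k -> x i != x k) ->
  [set i | x j <= x i] = j |: survivors (x j).
Proof.
move=> distinct; apply/setP => i; rewrite !inE le_eqVlt.
by case: (eqVneq i j) => [->|/distinct/negbTE]; rewrite ?eqxx // eq_sym => ->.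
Qed.

Lemma lifetime_criticalP (j : 'I_n) : (forall i k, i != k -> x i != x k) ->
  is_inf failed (x j) <-> critical phi j (survivors (x j)).
Proof. by move=> distinct; rewrite /critical -le_setE //; exact: lifetimeP. Qed.

End CriticalComponent.

Lemma exists_in_cons (I : eqType) (a : I) (r : seq I) (E : I -> Prop) :
  (exists2 i, i \in a :: r & E i) <-> E a \/ exists2 i, i \in r & E i.
Proof.
split=> [[i]|[Ea|[i ri Ei]]]; last by exists i; rewrite ?in_cons ?ri ?orbT.
  by rewrite in_cons => /orP[/eqP->|ri Ei]; [left | right; exists i].
by exists a; rewrite ?mem_head.
Qed.

Section FiniteAdditivity.
Variables (R : realFieldType) (Omega : Type) (PS : prob_space R Omega).
Local Set Implicit Arguments.
Local Unset Strict Implicit.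
Local Notation M := (measurable PS).
Local Notation P := (prob PS).

Lemma measurable0 : M (fun _ => False).
Proof. by apply: measurable_ext (measurableC (measurableT PS)) => w; tauto. Qed.

Lemma measurableI E F : M E -> M F -> M (fun w => E w /\ F w).
Proof.
move=> mE mF; apply: measurable_ext
  (measurableC (measurableU (measurableC mE) (measurableC mF))) => w.
by split=> [nEF|]; [split; apply: NNPP => ?; apply: nEF; tauto | tauto].
Qed.

Lemma prob0 : P (fun _ => False) = 0.
Proof.
have := prob_add measurable0 measurable0 (fun _ (f : False) _ => f).
rewrite (prob_ext PS (F := fun _ => False)) => [|w]; last by tauto.
by move/(congr1 (fun y => y - P (fun _ => False))); rewrite subrr addrK => ->.
Qed.

Lemma prob_empty E : (forall w, ~ E w) -> P E = 0.
Proof. by move=> nE; rewrite -prob0; apply: prob_ext => w; split => // /nE. Qed.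

Lemma prob_splitI E F : M E -> M F ->
  P F = P (fun w => F w /\ E w) + P (fun w => F w /\ ~ E w).
Proof.
move=> mE mF; rewrite -prob_add; last 3 first.
- exact: measurableI.
- exact/measurableI/measurableC.
- by move=> w [_ ?] [].
by apply: prob_ext => w; case: (classic (E w)); tauto.
Qed.

Lemma prob_le E F : M E -> M F -> (forall w, E w -> F w) -> P E <= P F.
Proof.
move=> mE mF EF; rewrite (prob_splitI mE mF).
rewrite (prob_ext PS (F := E)) => [|w]; last by split => [[]|/[dup]/EF].
by rewrite lerDl prob_ge0 //; apply/measurableI/measurableC.
Qed.

Lemma prob_union_le E F : M E -> M F -> P (fun w => E w \/ F w) <= P E + P F.
Proof.
move=> mE mF; rewrite (prob_splitI mE (measurableU mE mF)).
rewrite (prob_ext PS (F := E)) => [|w]; last by tauto.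
rewrite lerD2l; apply: prob_le => [||w]; last by tauto.
- by apply/measurableI/measurableC; [exact: measurableU|].
- exact: mF.
Qed.

Lemma prob_eq_ae N E F : M N -> P N = 0 -> M E -> M F ->
  (forall w, ~ N w -> (E w <-> F w)) -> P E = P F.
Proof.
move=> mN PN0 mE mF EF.
have drop_null G : M G -> P G = P (fun w => G w /\ ~ N w).
  move=> mG; rewrite (prob_splitI mN mG) -[RHS]add0r; congr (_ + _).
  apply/eqP; rewrite eq_le prob_ge0 ?andbT; last exact: measurableI.
  by rewrite -PN0 prob_le //; [exact: measurableI | move=> w []].
rewrite (drop_null E mE) (drop_null F mF); apply: prob_ext => w.
by split=> -[Gw nN]; split=> //; apply/(EF w nN).
Qed.

Lemma measurable_exists (I : eqType) (r : seq I) (E : I -> Omega -> Prop) :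
  (forall i, i \in r -> M (E i)) -> M (fun w => exists2 i, i \in r & E i w).
Proof.
elim: r => [|a r IH] mE.
  by apply: measurable_ext measurable0 => w; split => // -[].
have mEr i : i \in r -> M (E i).
  by move=> ri; apply: mE; rewrite in_cons ri orbT.
apply: measurable_ext (measurableU (mE a (mem_head _ _)) (IH mEr)) => w.
exact: iff_sym (exists_in_cons _ _ _ _).
Qed.

Lemma measurable_forall (I : eqType) (r : seq I) (E : I -> Omega -> Prop) :
  (forall i, i \in r -> M (E i)) -> M (fun w => forall i, i \in r -> E i w).
Proof.
elim: r => [|a r IH] mE.
  by apply: measurable_ext (measurableT PS) => w; split.
have mEr i : i \in r -> M (E i).
  by move=> ri; apply: mE; rewrite in_cons ri orbT.
apply: measurable_ext (measurableI (mE a (mem_head _ _)) (IH mEr)) => w.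
split=> [[Ea Er] i|Er]; last by split=> [|i ri]; apply: Er; rewrite ?mem_head ?in_cons ?ri ?orbT.
by rewrite in_cons => /orP[/eqP->|/Er].
Qed.

Lemma measurable_forall_fin (I : finType) (E : I -> Omega -> Prop) :
  (forall i, M (E i)) -> M (fun w => forall i, E i w).
Proof.
move=> mE.
apply: measurable_ext (measurable_forall (r := index_enum I) (fun i _ => mE i)) => w.
by split=> Ew i //; apply: Ew; rewrite mem_index_enum.
Qed.

Lemma prob_exists_disjoint (I : eqType) (r : seq I) (E : I -> Omega -> Prop) :
  uniq r -> (forall i, i \in r -> M (E i)) ->
  (forall i k w, i != k -> E i w -> E k w -> False) ->
  P (fun w => exists2 i, i \in r & E i w) = \sum_(i <- r) P (E i).
Proof.
elim: r => [|a r IH] /= => [_ _ _|/andP[ar ur] mE disj].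
  by rewrite big_nil; apply: prob_empty => w [].
have mEr i : i \in r -> M (E i).
  by move=> ri; apply: mE; rewrite in_cons ri orbT.
rewrite big_cons -IH // -prob_add; last 3 first.
- exact/mE/mem_head.
- exact: measurable_exists.
- move=> w Ea [i ri Ei]; apply: (disj a i w) => //.
  by apply: contraNneq ar => ->.
by apply: prob_ext => w; apply: exists_in_cons.
Qed.

Lemma prob_exists_null (I : eqType) (r : seq I) (E : I -> Omega -> Prop) :
  (forall i, i \in r -> M (E i) /\ P (E i) = 0) ->
  P (fun w => exists2 i, i \in r & E i w) = 0.
Proof.
elim: r => [|a r IH] nullE.
  by apply: prob_empty => w [].
have nullEr i : i \in r -> M (E i) /\ P (E i) = 0.
  by move=> ri; apply: nullE; rewrite in_cons ri orbT.
have [mEa PEa] := nullE a (mem_head _ _).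
have mEr : M (fun w => exists2 i, i \in r & E i w).
  by apply: measurable_exists => i /nullEr[].
rewrite (prob_ext PS (fun w => exists_in_cons _ a r (E^~ w))).
apply/eqP; rewrite eq_le prob_ge0 ?andbT; last exact: measurableU.
by rewrite -(addr0 0) -{1}PEa -(IH nullEr) prob_union_le.
Qed.

End FiniteAdditivity.

Section SurvivorDecomposition.
Local Set Implicit Arguments.
Local Unset Strict Implicit.
Variables (R : realFieldType) (n : nat) (Omega : Type) (PS : prob_space R Omega).
Variables (phi : {set 'I_n} -> bool) (X : Omega -> 'I_n -> R) (j : 'I_n).
Hypothesis Hmeas_lt : forall i k, measurable PS (fun w => X w i < X w k).
Local Notation M := (measurable PS).
Local Notation P := (prob PS).

Definition outliving (B : {set 'I_n}) (w : Omega) : Prop :=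
  survivors (X w) (X w j) = B.

Lemma measurable_outliving (B : {set 'I_n}) : M (outliving B).
Proof.
pose Ei i w := (X w j < X w i) = (i \in B).
apply: measurable_ext (measurable_forall_fin (E := Ei) _) => [w|i].
  rewrite /outliving /Ei; split=> [EB|<- i]; last by rewrite in_survivors.
  by apply/setP => i; rewrite in_survivors EB.
rewrite /Ei; case: (i \in B); first exact: Hmeas_lt.
apply: measurable_ext (measurableC (Hmeas_lt j i)) => w.
by split=> [/negP/negbTE|->].
Qed.

Lemma prob_partition (E : Omega -> Prop) : M E ->
  P E = \sum_(B : {set 'I_n}) P (fun w => E w /\ outliving B w).
Proof.
move=> mE; rewrite -prob_exists_disjoint ?index_enum_uniq //; first last.
- by move=> B1 B2 w + [_ eq1] [_ eq2]; rewrite -eq1 -eq2 eqxx.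
- by move=> B _; apply/measurableI/measurable_outliving.
apply: prob_ext => w; split=> [Ew|[B _ []//]].
by exists (survivors (X w) (X w j)); rewrite ?mem_index_enum.
Qed.

Lemma r_prob_decomp (A : {set 'I_n}) :
  r_prob PS X j A = \sum_(B : {set 'I_n} | A \subset B) P (outliving B).
Proof.
have mA : M (fun w => forall i, i \in A -> X w j < X w i).
  apply: measurable_forall_fin => i; case: (i \in A).
    by apply: measurable_ext (Hmeas_lt j i) => w; split=> // /(_ isT).
  by apply: measurable_ext (measurableT PS) => w.
rewrite /r_prob (prob_partition mA) [RHS]big_mkcond /=; apply: eq_bigr => B _.
case: ifP => [sAB|nsAB].
  apply: prob_ext => w; split=> [[]//|eqB]; split=> // i /(subsetP sAB).
  by rewrite -eqB in_survivors.
apply: prob_empty => w [Aw eqB]; move/negP: nsAB; apply; rewrite -eqB.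
by apply/subsetP => i /Aw; rewrite in_survivors.
Qed.

Lemma prob_outliving_self (B : {set 'I_n}) : j \in B -> P (outliving B) = 0.
Proof.
by move=> jB; apply: prob_empty => w eqB; move: jB; rewrite -eqB in_survivors ltxx.
Qed.

Lemma measurable_eq (i k : 'I_n) : M (fun w => X w i = X w k).
Proof.
apply: measurable_ext (measurableC (measurableU (Hmeas_lt i k) (Hmeas_lt k i))) => w.
split=> [nlt|->]; last by rewrite ltxx => -[].
by case: (ltgtP (X w i) (X w k)) => // lt; case: nlt; [left | right].
Qed.

Definition tie (w : Omega) : Prop := exists i k : 'I_n, i != k /\ X w i = X w k.

Lemma tie_null :
  (forall i k : 'I_n, i != k -> P (fun w => X w i = X w k) = 0) ->
  M tie /\ P tie = 0.
Proof.
move=> noties.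
pose Ep (ik : 'I_n * 'I_n) w := ik.1 != ik.2 /\ X w ik.1 = X w ik.2.
have nullEp ik : M (Ep ik) /\ P (Ep ik) = 0.
  case: ik => i k; rewrite /Ep /=; case: (eqVneq i k) => [->|neq].
    split; last by apply: prob_empty => w [].
    by apply: measurable_ext (@measurable0 _ _ PS) => w; split=> // -[].
  split; first by apply: measurable_ext (measurable_eq i k) => w; split=> [|[]].
  by rewrite -(noties i k neq); apply: prob_ext => w; split=> [[]|].
have tieE w : (exists2 ik, ik \in index_enum _ & Ep ik w) <-> tie w.
  split=> [[[i k] _ [neq eq]]|[i [k [neq eq]]]]; first by exists i, k.
  by exists (i, k); rewrite ?mem_index_enum.
split; first exact: measurable_ext tieE (measurable_exists (fun ik _ => (nullEp ik).1)).
by rewrite -(prob_ext PS tieE) prob_exists_null // => ik _.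
Qed.

Lemma I_BP_decomp :
  semicoherent phi -> (forall w i, 0 <= X w i) ->
  M (fun w => system_lifetime_is phi X w (X w j)) ->
  (forall i k : 'I_n, i != k -> P (fun w => X w i = X w k) = 0) ->
  I_BP PS phi X j = \sum_(B : {set 'I_n}) P (outliving B) * (critical phi j B)%:R.
Proof.
move=> Hphi Hnonneg mT noties; have [mtie Ptie] := tie_null noties.
rewrite /I_BP (prob_partition mT); apply: eq_bigr => B _.
have lifeE w : ~ tie w -> outliving B w ->
    system_lifetime_is phi X w (X w j) <-> critical phi j B.
  move=> ntie <-; apply: lifetime_criticalP => // i k neq.
  by apply/eqP => eq; apply: ntie; exists i, k.
have mTB := measurableI mT (measurable_outliving B).
case: (critical phi j B) lifeE => lifeE; rewrite ?mulr1 ?mulr0.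
  apply: (prob_eq_ae mtie Ptie) => // [|w ntie]; first exact: measurable_outliving.
  by split=> [[]//|oB]; split=> //; apply/(lifeE w ntie oB).
rewrite -(prob0 PS); apply: (prob_eq_ae mtie Ptie) => // [|w ntie].
  exact: measurable0.
by split=> // -[life oB]; have := (lifeE w ntie oB).1 life.
Qed.

End SurvivorDecomposition.

Theorem corollary6 (R : realFieldType) (n : nat) (Omega : Type)
  (PS : prob_space R Omega) (phi : {set 'I_n} -> bool)
  (X : Omega -> 'I_n -> R)
  (Hphi : semicoherent phi)
  (Hnonneg : forall w i, 0 <= X w i)
  (Hmeas_lt : forall i k, measurable PS (fun w => X w i < X w k))
  (Hmeas_T : forall j, measurable PS (fun w => system_lifetime_is phi X w (X w j)))
  (Hnoties : forall i k : 'I_n, i != k -> prob PS (fun w => X w i = X w k) = 0)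
  (j : 'I_n) :
  I_BP PS phi X j =
  \sum_(A : {set 'I_n} | j \notin A) r_prob PS X j A * @mobius R n phi (j |: A).
Proof.
rewrite (I_BP_decomp Hmeas_lt Hphi Hnonneg (Hmeas_T j) Hnoties).
under [RHS]eq_bigr do rewrite (r_prob_decomp j Hmeas_lt) mulr_suml.
rewrite (exchange_big_dep predT) //=; apply: eq_bigr => B _; rewrite -mulr_sumr.
case: (boolP (j \in B)) => jB; first by rewrite prob_outliving_self ?mul0r.
congr (_ * _); rewrite -critical_increment; last by case: Hphi.
rewrite -(sum_mobfU1 (fun D => (phi D)%:R) jB); apply: eq_bigl => A.
by rewrite andb_idl // => /subsetP sAB; apply: contra jB; apply: sAB.
Qed.
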